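(* Let $G$ be a regular graph on $n$ vertices. Then there is an ordering of the edges of $G$ such that any $n/12$ consecutive edges in this ordering form a matching. *)

From HB Require Import structures.
From mathcomp Require Import all_boot.
Set Implicit Arguments. Unset Strict Implicit. Unset Printing Implicit Defensive.

Definition simple_graph (T : finType) (e : rel T) : Prop :=
  symmetric e /\ irreflexive e.

Definition nbhd (T : finType) (e : rel T) (x : T) : {set T} := [set y | e x y].
Definition regular (T : finType) (e : rel T) : Prop :=
  exists d : nat, forall x : T, #|nbhd e x| = d.

Definition edge_set (T : finType) (e : rel T) : {set {set T}} :=
  [set [set x; y] | x in T, y in [pred y | e x y]].

Definition edge_ordering (T : finType) (e : rel T) (s : seq {set T}) : Prop :=
  uniq s /\ forall A : {set T}, (A \in s) = (A \in edge_set e).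

Definition consecutive_matching (T : finType) (k : nat) (s : seq {set T}) : Prop :=
  forall i j : nat, i < j -> j < size s -> j - i + 1 <= k ->
    [disjoint nth set0 s i & nth set0 s j].

From HB Require Import structures.
From mathcomp Require Import all_boot zify.
Set Implicit Arguments. Unset Strict Implicit. Unset Printing Implicit Defensive.

(* Colour the edges greedily with 2d colours: an edge meets at most 2d - 2 others.
   Then make the colouring equitable.  If two classes differ in size by more than
   one, their union has maximum degree two and splits into two matchings whose sizes
   differ by at most one: peel off an isolated edge, or a pendant edge together with
   its neighbour, and induct; if no vertex has degree one, both matchings cover the
   same vertices and are already of equal size.  Recolouring the two classes this way
   lowers the sum of the squared class sizes.  As n d = 2 |E|, every class then has at
   least n/4 - 1 >= 3 (n/12 - 1) edges.  Finally list the classes one after another,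
   each class starting with those of its edges that meet one of the first n/12 - 1
   edges listed after it; a matching meets an edge in at most two edges, so these are
   at most 2 (n/12 - 1), and every n/12 consecutive edges form a matching. *)

Section Matchings.

Variable T : finType.
Implicit Types (x y z : T) (f g h u : {set T}) (A B H M P Q : {set {set T}}).

Definition incident H x := [set g in H | x \in g].

Lemma incidentU A B x : incident (A :|: B) x = incident A x :|: incident B x.
Proof. by apply/setP => g; rewrite !inE andb_orl. Qed.

Lemma incidentD1 H f x : incident (H :\ f) x = incident H x :\ f.
Proof. by apply/setP => g; rewrite !inE andbA. Qed.

Lemma card_incident_le1 M x : trivIset M -> #|incident M x| <= 1.
Proof.
move/trivIsetP => tiM; apply/card_le1_eqP => g h; rewrite !inE.
move=> /andP[gM xg] /andP[hM xh].
by apply: contraTeq xh => ne; rewrite (disjointFl (tiM h g hM gM ne) xg).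
Qed.

Lemma card_incident_setU_le2 A B x :
  trivIset A -> trivIset B -> #|incident (A :|: B) x| <= 2.
Proof.
move=> /(card_incident_le1 x) tiA /(card_incident_le1 x) tiB.
by rewrite incidentU (leq_trans (leq_card_setU _ _)) // -[2]/(1 + 1) leq_add.
Qed.

Lemma disjoint_set2 x y g : [disjoint [set x; y] & g] = (x \notin g) && (y \notin g).
Proof. by rewrite !disjoints_subset subUset !sub1set !inE. Qed.

Lemma set2_of_mem f x : #|f| = 2 -> x \in f -> exists y, f = [set x; y].
Proof.
move=> /eqP/cards2P[a [b [_ ->]]]; rewrite !inE => /orP[]/eqP->; first by exists b.
by exists a; rewrite setUC.
Qed.

Lemma incident_eq_set2 H x f g :
  #|incident H x| <= 2 -> f \in incident H x -> g \in incident H x -> f != g ->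
  incident H x = [set f; g].
Proof.
move=> le2 fx gx fg; apply/esym/eqP; rewrite eqEcard subUset !sub1set fx gx.
by rewrite cards2 fg.
Qed.

Lemma card_cover_set2 M :
  trivIset M -> {in M, forall g, #|g| = 2} -> #|cover M| = 2 * #|M|.
Proof.
move=> /eqP <- M2; rewrite (eq_bigr (fun _ => 2)) //.
by rewrite sum_nat_const mulnC.
Qed.

Lemma cover_subset_leafless A B :
  (forall x, #|incident (A :|: B) x| != 1) -> trivIset A -> cover A \subset cover B.
Proof.
move=> leafless /trivIsetP tiA; apply/subsetP => x /bigcupP[g gA xg].
have gx : g \in incident (A :|: B) x by rewrite !inE gA xg.
have [h] : exists h, h \in incident (A :|: B) x :\ g.
  apply/set0Pn; rewrite -cards_eq0; move: (leafless x).
  by rewrite (cardsD1 g) gx; case: #|_|.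
rewrite !inE => /and3P[hg /orP[hA | hB] xh]; last by apply/bigcupP; exists h.
by rewrite (disjointFr (tiA h g hA gA hg) xh) in xg.
Qed.

Lemma sum_card_incident H :
  \sum_x #|incident H x| = \sum_(g in H) #|g|.
Proof.
under eq_bigr => x _ do rewrite -sum1_card big_mkcond /=.
rewrite exchange_big [RHS]big_mkcond /=; apply: eq_bigr => g _.
have [gH | gNH] := boolP (g \in H); last by rewrite big1 // => x _; rewrite inE (negbTE gNH).
by rewrite -sum1_card [RHS]big_mkcond; apply: eq_bigr => x _; rewrite !inE gH.
Qed.

Definition meeting H h := [set g in H | ~~ [disjoint g & h]].

Lemma meeting_set2 H x y : meeting H [set x; y] = incident H x :|: incident H y.
Proof.
by apply/setP => g; rewrite !inE disjoint_sym disjoint_set2 negb_and !negbK andb_orr.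
Qed.

Lemma card_meeting_le2 M h : trivIset M -> #|h| = 2 -> #|meeting M h| <= 2.
Proof.
move=> tiM /eqP/cards2P[x [y [_ ->]]]; rewrite meeting_set2.
rewrite (leq_trans (leq_card_setU _ _)) // -[2]/(1 + 1).
by rewrite leq_add ?card_incident_le1.
Qed.

Lemma card_meeting_has M hs :
  trivIset M -> {in hs, forall h, #|h| = 2} ->
  #|[set g in M | has (fun h => ~~ [disjoint g & h]) hs]| <= 2 * size hs.
Proof.
move=> tiM; elim: hs => [|h hs IHhs] hs2.
  by rewrite eq_card0 // => g; rewrite !inE andbF.
have -> : [set g in M | has (fun h => ~~ [disjoint g & h]) (h :: hs)] =
    meeting M h :|: [set g in M | has (fun h => ~~ [disjoint g & h]) hs].
  by apply/setP => g; rewrite !inE /= andb_orr.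
rewrite (leq_trans (leq_card_setU _ _)) // mulnS leq_add //.
  by rewrite card_meeting_le2 // hs2 ?mem_head.
by rewrite IHhs // => h' h'hs; rewrite hs2 // in_cons h'hs orbT.
Qed.

Definition matching_split H P Q :=
  [/\ P :|: Q = H, [disjoint P & Q], trivIset P & trivIset Q].

Definition balanced P Q := (#|P| <= #|Q|.+1) && (#|Q| <= #|P|.+1).

Lemma matching_split_sym H P Q : matching_split H P Q -> matching_split H Q P.
Proof. by case=> <- dPQ tiP tiQ; split; rewrite 1?setUC 1?disjoint_sym. Qed.

Lemma balanced_sym P Q : balanced P Q = balanced Q P.
Proof. exact: andbC. Qed.

Lemma matching_splitD1 H P Q f :
  matching_split H P Q -> matching_split (H :\ f) (P :\ f) (Q :\ f).
Proof.
case=> <- dPQ tiP tiQ; split; try exact: trivIsetD.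
  by rewrite setDUl.
exact: disjointW (subsetDl _ _) (subsetDl _ _) dPQ.
Qed.

Lemma matching_splitU1 H P Q f :
  matching_split H P Q -> f \notin H -> {in P, forall g, [disjoint f & g]} ->
  matching_split (f |: H) (f |: P) Q.
Proof.
case=> <- dPQ tiP tiQ; rewrite in_setU negb_or => /andP[fP fQ] dfP; split=> //.
- by rewrite setUA.
- by rewrite disjoints_subset subUset sub1set inE fQ -disjoints_subset.
apply/trivIsetP => g h /setU1P[->|gP] /setU1P[->|hP] gh.
- by rewrite eqxx in gh.
- exact: dfP.
- by rewrite disjoint_sym dfP.
- by move/trivIsetP: tiP; apply.
Qed.

Lemma balanced_split_isolated H P Q f :
  matching_split H P Q -> balanced P Q -> f \notin H ->
  {in H, forall g, [disjoint f & g]} ->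
  exists P' Q', matching_split (f |: H) P' Q' /\ balanced P' Q'.
Proof.
wlog lePQ : P Q / #|P| <= #|Q|.
  move=> ext sHPQ bPQ; case: (leqP #|P| #|Q|) => [/ext|/ltnW/ext]; first exact.
  by apply; [exact: matching_split_sym | rewrite balanced_sym].
move=> sHPQ /andP[_ leQP] fH dfH; case: (sHPQ) => defH _ _ _.
have fP : f \notin P by apply: contra fH; rewrite -defH inE => ->.
exists (f |: P), Q; split.
  by apply: matching_splitU1 => // g gP; apply: dfH; rewrite -defH inE gP.
by rewrite /balanced cardsU1 fP add1n ltnS lePQ (leqW leQP).
Qed.

Lemma balanced_split_pendant H P Q f g z :
  matching_split H P Q -> balanced P Q -> f \notin H -> g \notin H -> f != g ->
  {in H, forall u, [disjoint f & u]} ->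
  {in H, forall u, z \notin u -> [disjoint g & u]} -> #|incident H z| <= 1 ->
  exists P' Q', matching_split (f |: (g |: H)) P' Q' /\ balanced P' Q'.
Proof.
move=> + + fH gH fg dfH dgH zH1.
wlog zQ : P Q / {in Q, forall u, z \notin u}.
  move=> ext sHPQ bPQ; have [defH dPQ _ _] := sHPQ.
  have [/exists_inP[v vQ zv] | /exists_inPn zQ] := boolP [exists u in Q, z \in u];
    last exact: ext zQ sHPQ bPQ.
  apply: (ext Q P); [move=> u uP | exact: matching_split_sym | by rewrite balanced_sym].
  apply/negP => zu; move/card_le1_eqP: zH1 => /(_ u v).
  rewrite !inE -defH !inE uP vQ zu zv orbT => /(_ isT isT) euv.
  by rewrite euv (disjointFr dPQ uP) in vQ.
move=> sHPQ bPQ; have [defH _ _ _] := sHPQ.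
have fP : f \notin P by apply: contra fH; rewrite -defH inE => ->.
have gQ : g \notin Q by apply: contra gH; rewrite -defH inE => ->; rewrite orbT.
have sgH : matching_split (g |: H) P (g |: Q).
  apply/matching_split_sym/matching_splitU1; [exact: matching_split_sym | done |].
  by move=> u uQ; apply: dgH (zQ u uQ); rewrite -defH inE uQ orbT.
exists (f |: P), (g |: Q); split.
  apply: matching_splitU1 sgH _ _; first by rewrite !inE negb_or fg.
  by move=> u uP; apply: dfH; rewrite -defH inE uP.
by rewrite /balanced !cardsU1 fP gQ !add1n !ltnS.
Qed.

Lemma matching_split_leafless H A B :
  {in H, forall g, #|g| = 2} -> matching_split H A B ->
  (forall x, #|incident H x| != 1) -> #|A| = #|B|.
Proof.
move=> H2 [defH _ tiA tiB]; rewrite -defH => leafless.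
have coverAB : cover A = cover B.
  by apply/eqP; rewrite eqEsubset !cover_subset_leafless // => x; rewrite setUC.
have H2A : {in A, forall g, #|g| = 2} by move=> g gA; rewrite H2 // -defH inE gA.
have H2B : {in B, forall g, #|g| = 2} by move=> g gB; rewrite H2 // -defH inE gB orbT.
by apply/eqP; rewrite -(eqn_pmul2l (isT : 0 < 2)) -!card_cover_set2 // coverAB.
Qed.

Lemma balanced_matching_split H A B :
  {in H, forall g, #|g| = 2} -> matching_split H A B ->
  exists P Q, matching_split H P Q /\ balanced P Q.
Proof.
have [n] := ubnP #|H|; elim: n => // n IHn in H A B *; rewrite ltnS => leHn H2 sHAB.
have [x /cards1P[f incx] | leafless] := pickP (fun x => #|incident H x| == 1); last first.
  have eqAB := matching_split_leafless H2 sHAB (fun x => negbT (leafless x)).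
  by exists A, B; rewrite /balanced eqAB leqnSn.
have deg2 z : #|incident H z| <= 2 by case: sHAB => <- _ *; rewrite card_incident_setU_le2.
have /setIdP[fH xf] : f \in incident H x by rewrite incx set11.
have [y defy] := set2_of_mem (H2 f fH) xf.
have xnot u : u \in H -> u != f -> x \notin u.
  by move=> uH; apply: contra => xu; rewrite -in_set1 -incx inE uH xu.
have recurse H' A' B' : H' \subset H :\ f -> matching_split H' A' B' ->
    exists P Q, matching_split H' P Q /\ balanced P Q.
  move=> sH'H; apply: IHn; last by move=> u /(subsetP sH'H)/setD1P[_ /H2].
  by apply: leq_trans leHn; apply: proper_card (sub_proper_trans sH'H (properD1 fH)).
have [g /and3P[gH gf yg] | yH] := pickP (fun g => [&& g \in H, g != f & y \in g]).
  have [z defg] := set2_of_mem (H2 g gH) yg.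
  have incy : incident H y = [set f; g].
    by apply: incident_eq_set2; rewrite 1?eq_sym // !inE ?fH ?gH ?yg // defy !inE eqxx orbT.
  have ynot u : u \in H -> u != f -> u != g -> y \notin u.
    move=> uH uf ug; apply/negP => yu.
    have : u \in incident H y by rewrite inE uH yu.
    by rewrite incy !inE (negbTE uf) (negbTE ug).
  have [P [Q [sPQ bPQ]]] :=
    recurse _ _ _ (subsetDl _ [set g]) (matching_splitD1 g (matching_splitD1 f sHAB)).
  have gHf : g \in H :\ f by rewrite !inE gf gH.
  rewrite -(setD1K fH) -(setD1K gHf).
  apply: (balanced_split_pendant (z := z) sPQ bPQ).
  - by rewrite !inE eqxx andbF.
  - by rewrite !inE eqxx.
  - by rewrite eq_sym.
  - by move=> u /setD1P[ug /setD1P[uf uH]]; rewrite defy disjoint_set2 xnot ?ynot.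
  - by move=> u /setD1P[ug /setD1P[uf uH]] zu; rewrite defg disjoint_set2 ynot.
  have gz : g \in incident H z by rewrite inE gH defg !inE eqxx orbT.
  rewrite !incidentD1 (leq_trans (subset_leq_card (setSD _ (subsetDl _ [set f])))) //.
  by have := deg2 z; rewrite (cardsD1 g) gz.
have [P [Q [sPQ bPQ]]] := recurse _ _ _ (subxx _) (matching_splitD1 f sHAB).
rewrite -(setD1K fH); apply: balanced_split_isolated sPQ bPQ _ _.
  by rewrite !inE eqxx.
move=> u /setD1P[uf uH]; rewrite defy disjoint_set2 xnot //=.
by apply/negP => yu; have := yH u; rewrite uH uf yu.
Qed.

End Matchings.

Lemma balanced_sqr_lt p q a b :
  p <= q.+1 -> q <= p.+1 -> p + q = a + b -> b.+1 < a -> p ^ 2 + q ^ 2 < a ^ 2 + b ^ 2.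
Proof.
move=> lepq leqp eqs ltba.
have : (p + q) ^ 2 = (a + b) ^ 2 by rewrite eqs.
nia.
Qed.

Lemma sum_ltn_pair (I : finType) (F G : I -> nat) i j :
  i != j -> (forall k, k != i -> k != j -> G k = F k) ->
  G i + G j < F i + F j -> \sum_k G k < \sum_k F k.
Proof.
move=> ij eqGF lt.
have split2 (H : I -> nat) :
    \sum_k H k = H i + H j + \sum_(k | (k != i) && (k != j)) H k.
  by rewrite (bigD1 i) // (bigD1 j) 1?eq_sym //= addnA.
rewrite !split2 (eq_bigr F) ?ltn_add2r // => k /andP[]; exact: eqGF.
Qed.

Section EdgeColoring.

Variables (T : finType) (c : nat).
Implicit Types (E : {set {set T}}) (g h : {set T}) (col : {set T} -> 'I_c).

Definition color_class E col i := [set g in E | col g == i].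

Definition proper_coloring E col :=
  {in E &, forall g h, g != h -> col g = col h -> [disjoint g & h]}.

Lemma proper_coloringP E col :
  proper_coloring E col <-> forall i, trivIset (color_class E col i).
Proof.
split=> [prop i | tiE g h gE hE gh eqc].
  apply/trivIsetP => g h /setIdP[gE /eqP gi] /setIdP[hE /eqP hi] gh.
  by apply: prop; rewrite ?gi.
by move/trivIsetP: (tiE (col g)); apply; rewrite ?inE ?gE ?hE ?eqc ?eqxx.
Qed.

Lemma sum_card_color_class E col : \sum_i #|color_class E col i| = #|E|.
Proof.
rewrite -sum1_card (partition_big col predT) //=.
by apply: eq_bigr => i _; rewrite -sum1_card; apply: eq_bigl => g; rewrite inE.
Qed.

Lemma disjoint_color_class E col i j :
  i != j -> [disjoint color_class E col i & color_class E col j].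
Proof.
move=> ij; rewrite -setI_eq0; apply/eqP/setP => g; rewrite !inE.
by case: (col g =P i) => [->|_]; rewrite ?(negbTE ij) !andbF.
Qed.

Lemma greedy_coloring E d :
  0 < c -> 2 * d <= c.+1 -> {in E, forall g, #|g| = 2} ->
  (forall x, #|incident E x| <= d) -> exists col, proper_coloring E col.
Proof.
move=> c_gt0 dc; have [n] := ubnP #|E|; elim: n => // n IHn in E *.
rewrite ltnS => leEn E2 degE.
have [-> | [f fE]] := set_0Vmem E; first by exists (fun=> Ordinal c_gt0) => g; rewrite inE.
have [col' prop'] : exists col, proper_coloring (E :\ f) col.
  apply: IHn => [|g /setD1P[_ /E2] // | x].
    by apply: leq_trans leEn; rewrite (cardsD1 f E) fE.
  by rewrite incidentD1 (leq_trans (subset_leq_card (subsetDl _ _))).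
have [x [y defxy]] : exists x y, f = [set x; y].
  by move/eqP/cards2P: (E2 f fE) => [x [y [_ ->]]]; exists x, y.
have [i freei] : exists i, i \notin col' @: meeting (E :\ f) f.
  apply/existsP; rewrite -negb_forall; apply/negP => /forallP allused.
  have : c <= #|meeting (E :\ f) f|.
    rewrite -(card_ord c) (leq_trans _ (leq_imset_card col' _)) //.
    by apply: subset_leq_card; apply/subsetP => i _; exact: allused.
  have degD1 z : z \in f -> #|incident E z :\ f| <= d - 1.
    by move=> zf; have := degE z; rewrite (cardsD1 f) !inE fE zf /=; lia.
  have /degD1 dx : x \in f by rewrite defxy !inE eqxx.
  have /degD1 dy : y \in f by rewrite defxy !inE eqxx orbT.
  rewrite [X in meeting _ X]defxy meeting_set2 !incidentD1.
  by move/leq_trans/(_ (leq_card_setU _ _))/leq_trans/(_ (leq_add dx dy)); lia.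
have meet_free u : u \in E :\ f -> i = col' u -> [disjoint f & u].
  move=> uE iu; apply: contraR freei => meet; apply/imsetP; exists u => //.
  by rewrite inE uE disjoint_sym.
exists (fun g => if g == f then i else col' g) => g h gE hE.
case: (eqVneq g f) => [-> | gf]; case: (eqVneq h f) => [-> | hf].
- by [].
- by move=> _; apply: meet_free; rewrite !inE hf.
- by move=> _ /esym; rewrite disjoint_sym; apply: meet_free; rewrite !inE gf.
by apply: prop'; rewrite !inE ?gf ?hf.
Qed.

Lemma recolor_pair E col i j P Q :
  proper_coloring E col -> i != j ->
  matching_split (color_class E col i :|: color_class E col j) P Q ->
  exists col', [/\ proper_coloring E col', color_class E col' i = P,
    color_class E col' j = Q &
    forall k, k != i -> k != j -> color_class E col' k = color_class E col k].
Proof.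
move=> prop ij [defPQ dPQ tiP tiQ].
have inPQ g : (g \in P) || (g \in Q) = (g \in E) && ((col g == i) || (col g == j)).
  by rewrite -in_setU defPQ !inE andb_orr.
pose col' g := if g \in P then i else if g \in Q then j else col g.
have clP : color_class E col' i = P.
  apply/setP => g; rewrite !inE /col'; case: ifP => gP.
    by have := inPQ g; rewrite gP eqxx andbT => /esym/andP[].
  case: ifP => gQ; first by rewrite eq_sym (negbTE ij) andbF.
  by have := inPQ g; rewrite gP gQ; case: (g \in E); case: eqP.
have clQ : color_class E col' j = Q.
  apply/setP => g; rewrite !inE /col'; case: ifP => gP.
    by rewrite (negbTE ij) andbF (disjointFr dPQ gP).
  case: ifP => gQ; first by have := inPQ g; rewrite gQ orbT eqxx andbT => /esym/andP[].
  by have := inPQ g; rewrite gP gQ; case: (g \in E); case: (col g == j); rewrite ?orbT.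
have clk k : k != i -> k != j -> color_class E col' k = color_class E col k.
  move=> ki kj; apply/setP => g; rewrite !inE /col'.
  case: ifP => [gP | _]; last case: ifP => [gQ | _] //.
    have := inPQ g; rewrite gP => /esym/andP[-> /orP[] /eqP->].
      by rewrite eq_sym (negbTE ki).
    by rewrite eq_sym (negbTE ki) eq_sym (negbTE kj).
  have := inPQ g; rewrite gQ orbT => /esym/andP[-> /orP[] /eqP->].
    by rewrite eq_sym (negbTE kj) eq_sym (negbTE ki).
  by rewrite eq_sym (negbTE kj).
exists col'; split=> //; apply/proper_coloringP => k.
case: (eqVneq k i) => [-> | ki]; first by rewrite clP.
case: (eqVneq k j) => [-> | kj]; first by rewrite clQ.
by rewrite clk //; apply: (proper_coloringP E col).1.
Qed.

Definition color_energy E col := \sum_i #|color_class E col i| ^ 2.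

Lemma equitable_step E col i j :
  {in E, forall g, #|g| = 2} -> proper_coloring E col ->
  #|color_class E col j|.+1 < #|color_class E col i| ->
  exists col', proper_coloring E col' /\ color_energy E col' < color_energy E col.
Proof.
move=> E2 prop ltji; have ij : i != j by apply: contraTneq ltji => ->; rewrite ltnNge leqnSn.
set A := color_class E col i in ltji *; set B := color_class E col j in ltji *.
have tiE := (proper_coloringP E col).1 prop.
have dAB : [disjoint A & B] by apply: disjoint_color_class.
have AB2 : {in A :|: B, forall g, #|g| = 2} by move=> g /setUP[] /setIdP[/E2].
have [P [Q [sPQ /andP[lePQ leQP]]]] :=
  balanced_matching_split AB2 (And4 erefl dAB (tiE i) (tiE j)).
have [col' [prop' clP clQ clk]] := recolor_pair prop ij sPQ.
exists col'; split=> //; apply: (sum_ltn_pair ij) => [k ki kj | ]; first by rewrite clk.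
rewrite clP clQ.
have : #|P| + #|Q| = #|A| + #|B|.
  case: sPQ => defPQ dPQ _ _.
  by rewrite -(cardsUI P) -(cardsUI A) defPQ !disjoint_setI0 // cards0.
by move=> eqs; apply: balanced_sqr_lt.
Qed.

Lemma equitable_coloring E col :
  {in E, forall g, #|g| = 2} -> proper_coloring E col ->
  exists col', proper_coloring E col' /\
    forall i j, #|color_class E col' i| <= #|color_class E col' j|.+1.
Proof.
move=> E2; have [n] := ubnP (color_energy E col); elim: n => // n IHn in col *.
rewrite ltnS => le_n prop.
have [[i j] unbal | bal] := pickP (fun ij : 'I_c * 'I_c =>
  #|color_class E col ij.2|.+1 < #|color_class E col ij.1|); last first.
  by exists col; split=> // i j; have := bal (i, j); rewrite /= ltnNge => /negbFE.
have [col' [prop' lt]] := equitable_step E2 prop unbal.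
by apply: IHn prop'; apply: leq_trans lt le_n.
Qed.

Lemma card_le_color_class E col i :
  (forall j, #|color_class E col j| <= #|color_class E col i|.+1) ->
  #|E| <= c * #|color_class E col i|.+1.
Proof.
move=> le_i; rewrite -(sum_card_color_class E col).
apply: (@leq_trans (\sum_(j < c) #|color_class E col i|.+1)); first exact: leq_sum.
by rewrite sum_nat_const card_ord.
Qed.

End EdgeColoring.

Lemma mem_nth_drop (X : eqType) (x0 : X) (r : seq X) n i :
  n <= i -> i < size r -> nth x0 r i \in drop n r.
Proof.
move=> ni ir; rewrite -(subnKC ni) -nth_drop mem_nth // size_drop.
by rewrite ltn_sub2r // (leq_ltn_trans ni).
Qed.

Lemma mem_nth_take (X : eqType) (x0 : X) (r : seq X) n i :
  i < n -> i < size r -> nth x0 r i \in take n r.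
Proof.
by move=> ni ir; rewrite -(nth_take x0 ni) mem_nth // size_take; case: ifP.
Qed.

Section Sequencing.

Variable T : finType.
Implicit Types (a b g h : {set T}) (L s : seq {set T}) (M : {set {set T}}).

Lemma consecutive_matching_trivIset k L :
  uniq L -> {in L &, forall g h, g != h -> [disjoint g & h]} ->
  consecutive_matching k L.
Proof.
move=> uL tiL i j ij jL _; apply: tiL; rewrite ?mem_nth ?(ltn_trans ij) //.
by rewrite nth_uniq ?(ltn_trans ij) // neq_ltn ij.
Qed.

Lemma consecutive_matching_cat k L s :
  consecutive_matching k L -> consecutive_matching k s ->
  (forall a b, a \in drop (size L - (k - 1)) L -> b \in take (k - 1) s ->
    [disjoint a & b]) ->
  consecutive_matching k (L ++ s).
Proof.
move=> cL cs Lhs i j ij; rewrite size_cat => jLs win; rewrite !nth_cat.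
have [jL | Lj] := ltnP j (size L); first by rewrite (ltn_trans ij jL) cL.
have [iL | Li] := ltnP i (size L).
  apply: Lhs; [apply: mem_nth_drop | apply: mem_nth_take] => //;
    by move: jLs Lj iL; set nL := size L; set ns := size s; lia.
by apply: (cs (i - size L) (j - size L)); lia.
Qed.

Lemma consecutive_matching_prepend k M s :
  trivIset M -> 3 * (k - 1) <= #|M| -> {in s, forall h, #|h| = 2} ->
  consecutive_matching k s ->
  exists L, perm_eq L (enum M) /\ consecutive_matching k (L ++ s).
Proof.
move=> tiM bigM s2 cs.
pose bad g := has (fun h => ~~ [disjoint g & h]) (take (k - 1) s).
set B := filter bad (enum M); set G := filter (predC bad) (enum M).
have pBG : perm_eq (B ++ G) (enum M) by apply/permPl; apply: perm_filterC.
have sizeB : size B <= 2 * (k - 1).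
  have sBbad : B \subset [set g in M | bad g].
    by apply/subsetP => g; rewrite mem_filter mem_enum inE andbC.
  rewrite -(card_uniqP (filter_uniq _ (enum_uniq M))).
  apply: leq_trans (subset_leq_card sBbad) _.
  apply: leq_trans (card_meeting_has tiM _) _ => [h /mem_take/s2 // |].
  by rewrite size_take; case: ifP; lia.
have sizeBG : size B + size G = #|M| by rewrite !size_filter count_predC cardE.
exists (B ++ G); split=> //; apply: consecutive_matching_cat => //.
  apply: consecutive_matching_trivIset; first by rewrite (perm_uniq pBG) enum_uniq.
  by move=> g h; rewrite !(perm_mem pBG) !mem_enum; apply/trivIsetP.
move=> a b; rewrite size_cat drop_cat ifN; last by lia.
move=> /mem_drop; rewrite mem_filter => /andP[/hasPn good _] /good.
by rewrite negbK.
Qed.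

Lemma consecutive_matching_concat k ms :
  (forall M, M \in ms -> [/\ trivIset M, {in M, forall g, #|g| = 2} & 3 * (k - 1) <= #|M|]) ->
  pairwise (fun M N : {set {set T}} => [disjoint M & N]) ms ->
  exists s, [/\ consecutive_matching k s, uniq s &
    forall g, (g \in s) = has (fun M => g \in M) ms].
Proof.
elim: ms => [|M ms IHms] msP; first by exists [::]; split=> // i j.
rewrite pairwise_cons => /andP[/allP dM pw].
have msP' N : N \in ms -> _ := fun Nms => msP N (@mem_behead _ (M :: ms) N Nms).
have [tiM _ bigM] := msP M (mem_head _ _).
have [s [cs us mem_s]] := IHms msP' pw.
have s2 : {in s, forall h, #|h| = 2}.
  by move=> h; rewrite mem_s => /hasP[N /msP'[_ N2 _] /N2].
have [L [pLM cLs]] := consecutive_matching_prepend tiM bigM s2 cs.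
exists (L ++ s); split=> // [|g]; last by rewrite mem_cat (perm_mem pLM) mem_enum mem_s.
rewrite cat_uniq (perm_uniq pLM) enum_uniq us andbT; apply/hasPn => g.
rewrite mem_s (perm_mem pLM) mem_enum => /hasP[N Nms gN].
by rewrite (disjointFl (dM N Nms) gN).
Qed.

Lemma consecutive_matching_coloring c k E (col : {set T} -> 'I_c) :
  proper_coloring E col -> {in E, forall g, #|g| = 2} ->
  (forall i, 3 * (k - 1) <= #|color_class E col i|) ->
  exists s, [/\ consecutive_matching k s, uniq s & forall g, (g \in s) = (g \in E)].
Proof.
move=> prop E2 big; set ms := [seq color_class E col i | i <- enum 'I_c].
have [|| s [cs us mem_s]] := @consecutive_matching_concat k ms.
- move=> _ /mapP[i _ ->]; split=> //; first exact: (proper_coloringP E col).1.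
  by move=> g /setIdP[/E2].
- rewrite pairwise_map; move: (enum_uniq 'I_c); rewrite uniq_pairwise.
  by apply: sub_pairwise => i j /= /disjoint_color_class.
exists s; split=> // g; rewrite mem_s has_map.
apply/hasP/idP => [[i _ /setIdP[]] // | gE].
by exists (col g); rewrite ?mem_enum //= inE gE eqxx.
Qed.

End Sequencing.

Section Graphs.

Variables (T : finType) (e : rel T).

Lemma edge_setP g :
  reflect (exists x y, e x y /\ g = [set x; y]) (g \in edge_set e).
Proof.
apply: (iffP imset2P) => [[x y _ exy ->] | [x [y [exy ->]]]]; first by exists x, y.
by exists x y.
Qed.

Lemma card_edge g : irreflexive e -> g \in edge_set e -> #|g| = 2.
Proof.
move=> irr /edge_setP[x [y [exy ->]]]; rewrite cards2.
by case: eqVneq exy => [-> | //]; rewrite irr.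
Qed.

Lemma card_incident_edge_set x :
  simple_graph e -> #|incident (edge_set e) x| = #|nbhd e x|.
Proof.
move=> [sym irr].
have -> : incident (edge_set e) x = [set [set x; y] | y in nbhd e x].
  apply/setP => g; rewrite inE; apply/andP/imsetP.
    case=> /edge_setP[a [b [eab ->]]]; rewrite !inE => /orP[]/eqP->.
      by exists b; rewrite // inE.
    by exists a; [rewrite inE sym | rewrite setUC].
  move=> [y]; rewrite inE => exy ->; split; last by rewrite !inE eqxx.
  by apply/edge_setP; exists x, y.
apply: card_in_imset => y1 y2; rewrite !inE => exy1 _ eq12.
have : y1 \in [set x; y2] by rewrite -eq12 !inE eqxx orbT.
by rewrite !inE => /orP[]/eqP // y1x; rewrite y1x irr in exy1.
Qed.

Lemma handshake_regular d :
  simple_graph e -> (forall x, #|nbhd e x| = d) -> 2 * #|edge_set e| = #|T| * d.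
Proof.
move=> sg deg; rewrite -sum_nat_const -(eq_bigr _ (fun x _ => deg x)).
rewrite -(eq_bigr _ (fun x _ => card_incident_edge_set x sg)) sum_card_incident.
by rewrite (eq_bigr _ (fun g => card_edge sg.2)) sum_nat_const mulnC.
Qed.

End Graphs.

Theorem fact4p16 (T : finType) (e : rel T) :
  simple_graph e -> regular e ->
  exists s : seq {set T},
    edge_ordering e s /\ consecutive_matching (#|T| %/ 12) s.
Proof.
move=> sg [d deg]; set E := edge_set e; set k := #|T| %/ 12.
have E2 : {in E, forall g : {set T}, #|g| = 2} by move=> g; apply: card_edge sg.2.
have handshake : 2 * #|E| = #|T| * d by apply: handshake_regular.
have [d0 | d_gt0] := posnP d.
  move: handshake; rewrite d0 muln0 => /eqP; rewrite muln_eq0 cards_eq0 => /eqP E0.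
  by exists [::]; split=> [|i j //]; split=> // g; rewrite -/E E0 inE.
have [col0 prop0] : exists col : {set T} -> 'I_(2 * d), proper_coloring E col.
  apply: (greedy_coloring (d := d)) E2 _ => [||x]; rewrite ?muln_gt0 //.
  by rewrite card_incident_edge_set ?deg.
have [col [prop bal]] := equitable_coloring E2 prop0.
have big i : 3 * (k - 1) <= #|color_class E col i|.
  have := card_le_color_class (fun j => bal j i).
  have : 12 * k * d <= #|T| * d by rewrite leq_mul2r /k mulnC leq_divM orbT.
  nia.
have [s [cs us mem_s]] := consecutive_matching_coloring prop E2 big.
by exists s.
Qed.
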